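(* Let $k$ be an odd integer, $n\ge k\ge1$ and $1\le i^\circ\le n$. Then there exists an invertible linear map $S_{i^\circ}:M_{n\times k}(\mathbb F)\to M_{n\times k}(\mathbb F)$ such that: (S1) if $X\in M_{n\times k}(\mathbb F)$ and $\mathbf z\in\mathbb F^n$ satisfy $\mathbf z^tX=0$, then $(\mathbf z^\circ)^tS_{i^\circ}(X)=0$, where $\mathbf z^\circ=(\mathbf z_{i^\circ},\dots,\mathbf z_n,(-1)^{n+k+1}\mathbf z_1,\dots,(-1)^{n+k+1}\mathbf z_{i^\circ-1})^t$; (S2) $\det_{n,k}(X)=0$ implies $\det_{n,k}(S_{i^\circ}(X))=0$; (S3) for all $X\in M_{n\times k}(\mathbb F)$, if $\sum_{i=1}^n(-1)^i\big(S_{i^\circ}(X)\big)[i|)=0$ then $\sum_{i=1}^n(-1)^iX[i|)=0$.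
   Context: $X[i|)$ denotes the $i$-th row of $X$. Cullis' determinant: for $n\ge k$, $\det_{n,k}(X)=\sum_{c}\operatorname{sgn}(c)\det(X[c|))$, sum over $k$-subsets $c=\{c(1)<\dots<c(k)\}$ of $[n]$, $X[c|)$ the submatrix of rows in $c$, $\operatorname{sgn}(c)=(-1)^{\sum_{\alpha=1}^k(c(\alpha)-\alpha)}$. *)

From HB Require Import structures.
From mathcomp Require Import all_boot all_order all_algebra all_fingroup.
Set Implicit Arguments. Unset Strict Implicit. Unset Printing Implicit Defensive.
Import Order.TTheory GRing.Theory Num.Theory.
Local Open Scope ring_scope.

(* Indices are 0-based: row i : 'I_n of a matrix corresponds to row i+1 of the paper. *)

(* A k-subset c = {c(1) < ... < c(k)} of [n] is encoded as a strictly
   increasing map c : 'I_k -> 'I_n. *)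
Definition incr_map (n k : nat) (c : {ffun 'I_k -> 'I_n}) : bool :=
  [forall a : 'I_k, forall b : 'I_k, (a < b)%N ==> (c a < c b)%N].

(* sgn(c) = (-1)^(sum_alpha (c(alpha) - alpha)); shifting both to 0-based
   indexing leaves each difference unchanged. *)
Definition cullis_sign (F : ringType) (n k : nat) (c : {ffun 'I_k -> 'I_n}) : F :=
  (-1) ^+ (\sum_(a < k) (c a - a))%N.

Definition rowsub_of (F : Type) (n k : nat) (X : 'M[F]_(n, k))
  (c : {ffun 'I_k -> 'I_n}) : 'M[F]_k :=
  \matrix_(a < k, j < k) X (c a) j.

Definition cullis_det (F : comRingType) (n k : nat) (X : 'M[F]_(n, k)) : F :=
  \sum_(c : {ffun 'I_k -> 'I_n} | incr_map c) cullis_sign F c * \det (rowsub_of X c).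

Lemma ord_pos (n : nat) (j : 'I_n) : (0 < n)%N.
Proof. by case: n j => [[]|]. Qed.

Definition rot_ord (n : nat) (i0 j : 'I_n) : 'I_n :=
  Ordinal (ltn_pmod (i0 + j) (ord_pos j)).

(* z° = (z_{i°}, ..., z_n, (-1)^(n+k+1) z_1, ..., (-1)^(n+k+1) z_{i°-1}),
   with i0 = i° - 1 (0-based), as a row vector. *)
Definition zcirc (F : ringType) (n k : nat) (i0 : 'I_n) (z : 'rV[F]_n) : 'rV[F]_n :=
  \row_(j < n) ((if (i0 + j < n)%N then 1 else (-1) ^+ (n + k + 1)) * z 0 (rot_ord i0 j)).

(* sum_{i=1}^n (-1)^i X[i|) ; 0-based row i is paper row i+1 *)
Definition alt_row_sum (F : ringType) (n k : nat) (X : 'M[F]_(n, k)) : 'rV[F]_k :=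
  \sum_(i < n) (-1) ^+ i.+1 *: row i X.

From HB Require Import structures.
From mathcomp Require Import all_boot all_order all_algebra all_fingroup.
From mathcomp Require Import zify ring.
Set Implicit Arguments. Unset Strict Implicit. Unset Printing Implicit Defensive.
Import GRing.Theory.
Local Open Scope ring_scope.

(* S_{i°} rotates the rows of X cyclically so that row i° comes first, multiplying
   the rows that wrap around by (-1)^(n+k+1); it is the (i°-1)-fold iterate of the
   one-step rotation.  (S1) holds because z° carries the same signs, so that
   z°^t S(X) = z^t X, and (S3) because, k being odd, the alternating row sum is only
   multiplied by (-1)^(i°-1).  For (S2), one rotation step multiplies det_{n,k} by
   (-1)^k: a k-subset c avoiding the last row is shifted to c + 1, which changes
   sgn(c) by (-1)^k; a subset containing it becomes {1} u (c \ {n}) + 1, and the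
   sign of the resulting k-cycle of rows, the factor (-1)^(n+k+1) and the change of
   sgn(c) again combine to (-1)^k. *)

Lemma signr_eq_even (R : pzRingType) (a b t : nat) :
  (a + b = 2 * t)%N -> (-1) ^+ a = (-1) ^+ b :> R.
Proof.
move=> ab; rewrite -signr_odd -[RHS]signr_odd; congr (_ ^+ _).
have : ~~ odd (a + b) by rewrite ab oddM.
by rewrite oddD; case: (odd a); case: (odd b).
Qed.

Lemma ltn_ord_max n (i : 'I_n.+1) : (i < n)%N = (i != ord_max).
Proof. by rewrite ltn_neqAle leq_ord andbT -(inj_eq (@ord_inj _)). Qed.

Lemma ord_gt0 n (i : 'I_n.+1) : (0 < i)%N = (i != ord0).
Proof. by rewrite lt0n -(inj_eq (@ord_inj _)). Qed.

Lemma ordSE n (i : 'I_n.+1) : ordS i = (if i < n then i.+1 else 0)%N :> nat.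
Proof.
rewrite /=; case: ltnP => [lt_in | le_ni]; first by rewrite modn_small.
by rewrite (_ : i.+1 = n.+1) ?modnn //; have := ltn_ord i; lia.
Qed.

Lemma ord_predE n (i : 'I_n.+1) : ord_pred i = (if 0 < i then i.-1 else n)%N :> nat.
Proof.
rewrite /=; case: posnP => [-> | i_gt0]; first by rewrite modn_small.
by rewrite (_ : (i + n.+1).-1 = i.-1 + n.+1)%N ?modnDr ?modn_small //;
  have := ltn_ord i; lia.
Qed.

Lemma ordS_add_wrap n (i : 'I_n.+1) : (ordS i + (i == ord_max) * n.+1 = i.+1)%N.
Proof.
rewrite ordSE -(inj_eq (@ord_inj _)) /=.
by case: (ltnP i n) => ?; case: eqP => ? /=; have := ltn_ord i; lia.
Qed.

Section IncreasingMaps.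
Variables n k : nat.
Implicit Types c : {ffun 'I_k -> 'I_n}.

Lemma incrP c :
  reflect (forall a b : 'I_k, (a < b)%N -> (c a < c b)%N) (incr_map c).
Proof.
apply: (iffP forallP) => [incr_c a b | incr_c a].
  by have /forallP/(_ b)/implyP := incr_c a.
by apply/forallP => b; apply/implyP; apply: incr_c.
Qed.

Lemma incr_map_le c (a b : 'I_k) : incr_map c -> (a <= b)%N -> (c a <= c b)%N.
Proof.
move=> /incrP incr_c; rewrite leq_eqVlt => /orP [/eqP/val_inj -> // | ].
by move/incr_c/ltnW.
Qed.

Lemma incr_map_inj c : incr_map c -> injective c.
Proof.
move=> /incrP incr_c a b eq_ab.
by case: (ltngtP a b) => [/incr_c | /incr_c | /val_inj //]; rewrite eq_ab ltnn.
Qed.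

Lemma incr_map_ge c (a : 'I_k) : incr_map c -> (a <= c a)%N.
Proof.
move=> /incrP incr_c; suff ge_c m (lt_mk : (m < k)%N) : (m <= c (Ordinal lt_mk))%N.
  by rewrite (_ : a = Ordinal (ltn_ord a)) //; apply: val_inj.
elim: m lt_mk => // m IHm lt_mk.
have lt_m'k : (m < k)%N by apply: ltnW.
have := incr_c (Ordinal lt_m'k) (Ordinal lt_mk) (ltnSn m).
by have := IHm lt_m'k; lia.
Qed.

Lemma cullis_signE (R : nzRingType) c : incr_map c ->
  cullis_sign R c = (-1) ^+ (\sum_(a < k) c a) * (-1) ^+ (\sum_(a < k) a).
Proof.
move=> incr_c; rewrite /cullis_sign -exprD.
apply: (@signr_eq_even _ _ _ (\sum_(a < k) (c a - a) + \sum_(a < k) a)%N).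
suff <- : (\sum_(a < k) (c a - a) + \sum_(a < k) a = \sum_(a < k) c a)%N by lia.
by rewrite -big_split; apply: eq_bigr => a _ /=; rewrite subnK ?incr_map_ge.
Qed.

End IncreasingMaps.

Section RowRotation.
Variables (R : comNzRingType) (n k : nat).
Implicit Types (X : 'M[R]_(n, k)) (m p : nat).

Definition rot_by m (j : 'I_n) : 'I_n := Ordinal (ltn_pmod (m + j) (ord_pos j)).

(* Row j of [rot_rows m X] is row (m + j) mod n of X, times (-1)^(n+k+1) for
   each wrap-around; [rot_rows i0 X] is the paper's S_{i°}(X) with i0 = i° - 1. *)
Definition rot_rows m X : 'M[R]_(n, k) :=
  \matrix_(j, b) ((-1) ^+ ((n + k + 1) * ((m + j) %/ n))%N * X (rot_by m j) b).

Lemma rot_by_inj m : injective (rot_by m).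
Proof.
move=> j1 j2 /(congr1 val) /eqP; rewrite /= eqn_modDl !modn_small //.
by move/eqP/val_inj.
Qed.

Lemma rot_rowsD m p X : rot_rows (m + p) X = rot_rows p (rot_rows m X).
Proof.
apply/matrixP => j b; rewrite !mxE mulrA -exprD -mulnDr.
have n_gt0 := ord_pos j; have def_pj := divn_eq (p + j) n.
have def_mpj : (m + p + j = (p + j) %/ n * n + (m + (p + j) %% n))%N.
  by rewrite -addnA [in LHS]def_pj addnCA.
rewrite def_mpj divnMDl //; congr (_ * X _ b).
by apply: val_inj; rewrite /= def_mpj modnMDl.
Qed.

Lemma rot_rows_mul2n q X : rot_rows (q * n.*2) X = X.
Proof.
apply/matrixP => j b; rewrite !mxE.
have -> : (q * n.*2 = q.*2 * n)%N by lia.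
rewrite divnMDl ?(ord_pos j) // divn_small // addn0.
rewrite -signr_odd oddM odd_double andbF mul1r; congr (X _ b).
by apply: val_inj; rewrite /= modnMDl modn_small.
Qed.

Lemma rot_rows0 X : rot_rows 0 X = X.
Proof. exact: (rot_rows_mul2n 0). Qed.

Lemma rot_rows_bij m : (0 < n)%N -> bijective (rot_rows m).
Proof.
move=> n_gt0; pose m' := (m * (n.*2).-1)%N.
have m_m' : (m + m' = m * n.*2)%N by rewrite addnC -mulnSr prednK ?double_gt0.
exists (rot_rows m') => X; rewrite -rot_rowsD.
  by rewrite m_m' rot_rows_mul2n.
by rewrite addnC m_m' rot_rows_mul2n.
Qed.

Lemma rot_rows_linear m : linear (rot_rows m).
Proof. by move=> a X Y; apply/matrixP => j b; rewrite !mxE mulrDr mulrCA. Qed.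

Lemma wrap_sign_small m (j : 'I_n) e : (m < n)%N ->
  (-1) ^+ (e * ((m + j) %/ n))%N = (if (m + j < n)%N then 1 else (-1) ^+ e) :> R.
Proof.
move=> lt_mn; case: ltnP => [lt_mj_n | le_n_mj]; first by rewrite divn_small ?muln0.
have -> : (m + j = 1 * n + (m + j - n))%N by lia.
by rewrite divnMDl ?(ord_pos j) // divn_small ?addn0 ?muln1 //; have := ltn_ord j; lia.
Qed.

Lemma zcirc_mul_rot_rows (i0 : 'I_n) (z : 'rV[R]_n) X :
  zcirc k i0 z *m rot_rows i0 X = z *m X.
Proof.
apply/rowP => b; rewrite !mxE [RHS](reindex_inj (rot_by_inj (m := i0))).
apply: eq_bigr => j _; rewrite !mxE wrap_sign_small // mulrACA.
by case: ifP => _; rewrite ?mul1r // -expr2 sqrr_sign mul1r.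
Qed.

Lemma alt_row_sum_rot_rows m X : odd k ->
  alt_row_sum (rot_rows m X) = (-1) ^+ m *: alt_row_sum X.
Proof.
move=> odd_k; rewrite /alt_row_sum scaler_sumr [RHS](reindex_inj (rot_by_inj (m := m))).
apply: eq_bigr => j _; rewrite scalerA.
have -> : row j (rot_rows m X) =
    (-1) ^+ ((n + k + 1) * ((m + j) %/ n))%N *: row (rot_by m j) X.
  by apply/rowP => b; rewrite !mxE.
rewrite scalerA -!exprD; congr (_ *: _).
(* With m + j = q n + r and k = 2t + 1, the two exponents add up to
   2 (j + 1 + t q + q + m). *)
have def_mj := divn_eq (m + j) n; have def_k := odd_double_half k.
rewrite odd_k -muln2 in def_k.
apply: (@signr_eq_even _ _ _ (j + 1 + k./2 * ((m + j) %/ n) + (m + j) %/ n + m)).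
rewrite /=; nia.
Qed.

End RowRotation.

Section CullisRotation.
Variables (R : comNzRingType) (N K : nat).
Local Notation n := N.+1.
Local Notation k := K.+1.
Implicit Types c d : {ffun 'I_k -> 'I_n}.

(* The increasing enumeration of the k-subset {c(a) + 1 mod n}: when c reaches
   the last row, the wrapped-around 0 moves to the front. *)
Definition cycle_incr c : {ffun 'I_k -> 'I_n} :=
  [ffun a => ordS (c (if c ord_max == ord_max then ord_pred a else a))].

Definition uncycle_incr d : {ffun 'I_k -> 'I_n} :=
  [ffun a => ord_pred (d (if d ord0 == ord0 then ordS a else a))].

Lemma incr_map_le_max c a : incr_map c -> (c a <= c ord_max)%N.
Proof. by move=> incr_c; apply: (incr_map_le (b := ord_max) incr_c (leq_ord a)). Qed.

Lemma incr_map_ge_ord0 c a : incr_map c -> (c ord0 <= c a)%N.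
Proof. by move=> incr_c; apply: (incr_map_le (a := ord0) incr_c (leq0n a)). Qed.

Lemma incr_map_eq_max c a : incr_map c ->
  (c a == ord_max) = (a == ord_max) && (c ord_max == ord_max).
Proof.
move=> incr_c; apply/idP/andP => [/eqP c_a_max | [/eqP -> //]].
have c_max : c ord_max = ord_max.
  by apply: ord_inj; apply/eqP; rewrite eqn_leq leq_ord -c_a_max incr_map_le_max.
by rewrite -(inj_eq (incr_map_inj incr_c)) c_a_max c_max.
Qed.

Lemma cycle_incrE c a : incr_map c ->
  cycle_incr c a = (if c ord_max == ord_max then
                      if a == ord0 then 0 else (c (ord_pred a)).+1
                    else (c a).+1)%N :> nat.
Proof.
move=> incr_c; rewrite ffunE ordSE; case: eqP => [wrap | /eqP nowrap].
  case: eqP => [-> | /eqP nz_a].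
    have -> : ord_pred ord0 = ord_max :> 'I_k by apply: ord_inj; rewrite ord_predE.
    by rewrite wrap /= ltnn.
  have lt_pred_a : (ord_pred a < K)%N.
    by rewrite ord_predE ord_gt0 nz_a -ltnS prednK ?ord_gt0.
  by have /incrP/(_ _ ord_max lt_pred_a) := incr_c; rewrite wrap => ->.
by rewrite (leq_ltn_trans (incr_map_le_max a incr_c)) // ltn_ord_max.
Qed.

Lemma uncycle_incrE d a : incr_map d ->
  uncycle_incr d a = (if d ord0 == ord0 then
                        if a == ord_max then N else (d (ordS a)).-1
                      else (d a).-1)%N :> nat.
Proof.
move=> incr_d; rewrite ffunE ord_predE; case: eqP => [d0 | /eqP nz_d0].
  case: eqP => [-> | /eqP ne_max].
    have -> : ordS ord_max = ord0 :> 'I_k by apply: ord_inj; rewrite ordSE ltnn.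
    by rewrite d0.
  have lt0_Sa : ((ord0 : 'I_k) < ordS a)%N by rewrite ordSE ltn_ord_max ne_max.
  by have /incrP/(_ _ _ lt0_Sa) := incr_d; rewrite d0 => ->.
by rewrite (leq_trans _ (incr_map_ge_ord0 a incr_d)) // ord_gt0.
Qed.

Lemma cycle_incr_incr c : incr_map c -> incr_map (cycle_incr c).
Proof.
move=> incr_c; have /incrP lt_c := incr_c.
apply/incrP => a b lt_ab; rewrite !cycle_incrE //; case: eqP => _; last first.
  by rewrite ltnS lt_c.
have nz_b : b != ord0 by rewrite -ord_gt0 (leq_ltn_trans _ lt_ab).
rewrite (negbTE nz_b); case: eqP => // /eqP nz_a.
move: nz_a nz_b; rewrite -!ord_gt0 => a_gt0 b_gt0.
by rewrite ltnS lt_c // !ord_predE a_gt0 b_gt0 -!subn1; lia.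
Qed.

Lemma uncycle_incr_incr d : incr_map d -> incr_map (uncycle_incr d).
Proof.
move=> incr_d; have /incrP lt_d := incr_d.
apply/incrP => a b lt_ab; rewrite !uncycle_incrE //; case: eqP => [d0 | /eqP nz_d0].
  have lt_aK : (a < K)%N by rewrite (leq_trans lt_ab) ?leq_ord.
  have Sa_gt0 : (0 < d (ordS a))%N.
    by rewrite -[0%N]/(nat_of_ord (ord0 : 'I_n)) -d0 lt_d // ordSE lt_aK.
  have ne_a : a != ord_max by rewrite -ltn_ord_max.
  rewrite (negbTE ne_a); case: eqP => [_ | /eqP ne_b].
    by have := ltn_ord (d (ordS a)); rewrite -subn1; lia.
  have lt_bK : (b < K)%N by rewrite ltn_ord_max.
  have := lt_d (ordS a) (ordS b); rewrite !ordSE lt_aK lt_bK ltnS => /(_ lt_ab).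
  by rewrite -!subn1; lia.
have := lt_d a b lt_ab; have := incr_map_ge_ord0 a incr_d.
by move: nz_d0; rewrite -ord_gt0 -!subn1; lia.
Qed.

Lemma cycle_incr_ord0 c : incr_map c ->
  (cycle_incr c ord0 == ord0) = (c ord_max == ord_max).
Proof.
by move=> incr_c; rewrite -val_eqE /= cycle_incrE // eqxx; case: (_ == ord_max).
Qed.

Lemma uncycle_incr_max d : incr_map d ->
  (uncycle_incr d ord_max == ord_max) = (d ord0 == ord0).
Proof.
move=> incr_d; rewrite -val_eqE /= uncycle_incrE // eqxx.
case: (d ord0 =P ord0) => [_ | /eqP]; first by rewrite eqxx.
rewrite -ord_gt0 => d0_gt0.
have le_d0_max := incr_map_ge_ord0 ord_max incr_d; have lt_max_n := ltn_ord (d ord_max).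
by apply: negbTE; apply/eqP; rewrite -subn1; lia.
Qed.

Lemma cycle_incrK c : incr_map c -> uncycle_incr (cycle_incr c) = c.
Proof.
move=> incr_c; apply/ffunP => a; apply: ord_inj.
rewrite uncycle_incrE ?cycle_incr_incr // cycle_incr_ord0 //.
case: eqP => [wrap | /eqP nowrap]; last by rewrite cycle_incrE // (negbTE nowrap).
case: eqP => [-> | /eqP]; first by rewrite wrap.
rewrite -ltn_ord_max => lt_aK.
have nz_Sa : ordS a != ord0 by rewrite -ord_gt0 ordSE lt_aK.
by rewrite cycle_incrE // wrap eqxx (negbTE nz_Sa) ordSK.
Qed.

Lemma uncycle_incrK d : incr_map d -> cycle_incr (uncycle_incr d) = d.
Proof.
move=> incr_d; have /incrP lt_d := incr_d; apply/ffunP => a; apply: ord_inj.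
rewrite cycle_incrE ?uncycle_incr_incr // uncycle_incr_max //.
case: eqP => [d0 | /eqP nz_d0]; last first.
  have d0_gt0 : (0 < d ord0)%N by rewrite ord_gt0.
  rewrite uncycle_incrE // (negbTE nz_d0) prednK //.
  exact: leq_trans d0_gt0 (incr_map_ge_ord0 a incr_d).
case: eqP => [-> | /eqP nz_a]; first by rewrite d0.
have a_gt0 : (0 < a)%N by rewrite ord_gt0.
have lt_pred_a : (ord_pred a < K)%N by rewrite ord_predE a_gt0 -ltnS prednK.
have ne_pred_a : ord_pred a != ord_max by rewrite -ltn_ord_max.
rewrite uncycle_incrE // d0 eqxx (negbTE ne_pred_a) ord_predK prednK //.
by rewrite -[0%N]/(nat_of_ord (ord0 : 'I_n)) -d0 lt_d.
Qed.

Lemma sum_cycle_incr c :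
  (\sum_(a < k) cycle_incr c a = \sum_(a < k) ordS (c a))%N.
Proof.
under eq_bigr do rewrite ffunE.
by case: eqP => _ //; rewrite [RHS](reindex_inj (@ord_pred_inj k)).
Qed.

Lemma sum_ordS_incr c : incr_map c ->
  (\sum_(a < k) ordS (c a) + (c ord_max == ord_max) * n = \sum_(a < k) c a + k)%N.
Proof.
move=> incr_c.
have -> : ((c ord_max == ord_max) * n = \sum_(a < k) (c a == ord_max) * n)%N.
  rewrite (bigD1 ord_max) //= big1 ?addn0 // => a /negbTE ne_a.
  by rewrite incr_map_eq_max // ne_a.
rewrite -big_split /= (eq_bigr (fun a => c a + 1)%N) => [|a _]; last by rewrite addn1 ordS_add_wrap.
by rewrite big_split /= sum1_card card_ord.
Qed.

Lemma rowsub_rot_rows1 (X : 'M[R]_(n, k)) c :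
  rowsub_of (rot_rows 1 X) c =
  \matrix_(a, b) ((-1) ^+ ((n + k + 1) * (c a == ord_max)) * X (ordS (c a)) b).
Proof.
apply/matrixP => a b; rewrite !mxE add1n.
congr ((-1) ^+ (_ * _) * X _ b); last by apply: val_inj.
case: eqP => [-> | /eqP ne_ca]; first by rewrite divnn.
by rewrite divn_small // ltnS ltn_ord_max.
Qed.

Lemma lift_perm_ordS (a : 'I_k) : lift_perm ord_max ord0 1 a = ordS a.
Proof.
case: (unliftP ord_max a) => [a' | ] ->; last first.
  by rewrite lift_perm_id; apply: ord_inj; rewrite ordSE ltnn.
rewrite lift_perm_lift perm1; apply: ord_inj.
have lt_a_K : (a' < K)%N := ltn_ord a'.
by rewrite ordSE /= /bump /= [(K <= a')%N]leqNgt lt_a_K /= lt_a_K.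
Qed.

Lemma det_rowsub_rot_rows1 (X : 'M[R]_(n, k)) c : incr_map c ->
  \det (rowsub_of (rot_rows 1 X) c) =
  (-1) ^+ ((c ord_max == ord_max) * n) * \det (rowsub_of X (cycle_incr c)).
Proof.
move=> incr_c; case: (c ord_max =P ord_max) => [wrap | /eqP nowrap]; last first.
  rewrite mul0n expr0 mul1r; congr (\det _); apply/matrixP => a b.
  rewrite rowsub_rot_rows1 !mxE ffunE incr_map_eq_max // (negbTE nowrap) andbF.
  by rewrite muln0 expr0 mul1r.
pose sgn_last := \row_(a < k) (-1) ^+ ((n + k + 1) * (a == ord_max)) : 'rV[R]_k.
have -> : rowsub_of (rot_rows 1 X) c = diag_mx sgn_last *m
    row_perm (lift_perm ord_max ord0 1) (rowsub_of X (cycle_incr c)).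
  apply/matrixP => a b; rewrite rowsub_rot_rows1 mul_diag_mx !mxE lift_perm_ordS ffunE.
  by rewrite wrap eqxx ordSK -wrap (inj_eq (incr_map_inj incr_c)).
rewrite det_mulmx det_diag row_permE det_mulmx det_perm odd_lift_perm odd_perm1.
rewrite (bigD1 ord_max) //= big1 => [|a /negbTE ne_a]; last by rewrite mxE ne_a muln0.
rewrite mxE eqxx muln1 mulr1 !addbF signr_odd mulrA -exprD mul1n.
by congr (_ * _); apply: (@signr_eq_even _ _ _ (n + K + 1)); lia.
Qed.

Lemma cullis_rot_rows1 (X : 'M[R]_(n, k)) :
  cullis_det (rot_rows 1 X) = (-1) ^+ k * cullis_det X.
Proof.
rewrite /cullis_det mulr_sumr [RHS](reindex_onto cycle_incr uncycle_incr); last first.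
  by move=> d; apply: uncycle_incrK.
apply: eq_big => [c | c incr_c].
  apply/idP/andP => [incr_c | [/uncycle_incr_incr + /eqP <-] //].
  by split; [apply: cycle_incr_incr | apply/eqP; apply: cycle_incrK].
rewrite det_rowsub_rot_rows1 // !cullis_signE ?cycle_incr_incr //.
have := sum_ordS_incr incr_c; rewrite -sum_cycle_incr.
set A := (\sum_(a < k) c a)%N; set S := (\sum_(a < k) cycle_incr c a)%N.
set W := ((c ord_max == ord_max) * n)%N; set B := (\sum_(a < k) a)%N => sum_S.
have sgn : (-1) ^+ A * (-1) ^+ W = (-1) ^+ k * (-1) ^+ S :> R.
  by rewrite -!exprD; apply: (@signr_eq_even _ _ _ (S + W)); lia.
set D := \det _.
transitivity ((-1) ^+ A * (-1) ^+ W * ((-1) ^+ B * D)); first by ring.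
by rewrite sgn; ring.
Qed.

Lemma cullis_rot_rows m (X : 'M[R]_(n, k)) :
  cullis_det (rot_rows m X) = (-1) ^+ (m * k) * cullis_det X.
Proof.
elim: m => [|m IHm]; first by rewrite rot_rows0 mul1r.
by rewrite -[m.+1]addn1 rot_rowsD cullis_rot_rows1 IHm mulrA -exprD mulnDl mul1n addnC.
Qed.

End CullisRotation.

Theorem mainTheorem18 (F : fieldType) (n k : nat) (i0 : 'I_n) :
  odd k -> (1 <= k)%N -> (k <= n)%N ->
  exists S : 'M[F]_(n, k) -> 'M[F]_(n, k),
    [/\ linear S, bijective S,
        (forall (X : 'M[F]_(n, k)) (z : 'rV[F]_n),
            z *m X = 0 -> zcirc k i0 z *m S X = 0),
        (forall X : 'M[F]_(n, k), cullis_det X = 0 -> cullis_det (S X) = 0)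
      & (forall X : 'M[F]_(n, k), alt_row_sum (S X) = 0 -> alt_row_sum X = 0)].
Proof.
(* [1 <= k] follows from [odd k], and the rotation argument never needs [k <= n]. *)
move=> odd_k _ _; case: k odd_k => [// | K] odd_k; case: n i0 => [[] // | N] i0.
exists (rot_rows i0); split.
- exact: rot_rows_linear.
- exact: rot_rows_bij (ltn0Sn N).
- by move=> X z zX0; rewrite zcirc_mul_rot_rows.
- by move=> X detX0; rewrite cullis_rot_rows detX0 mulr0.
- move=> X; rewrite alt_row_sum_rot_rows // => /(congr1 ( *:%R ((-1) ^+ i0))).
  by rewrite scalerA -exprD -signr_odd addnn odd_double scale1r scaler0.
Qed.
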